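(* Let $\Omega\subset\mathbb{R}^d$, let $y:\Omega\to\mathbb{R}^m$ be a forward model, let $\pi(p)$ be a prior probability density on $\Omega$, let $y^m\in\mathbb{R}^m$, and let $\Sigma\in\mathbb{R}^{m\times m}$ be symmetric positive definite. Define $\pi(y^m\mid p)=(2\pi)^{-m/2}\det(\Sigma^2)^{-1/2}\exp(-\tfrac12\|y^m-y(p)\|_{\Sigma^{-2}}^2)$, $\pi(y^m)=\int_\Omega\pi(p)\pi(y^m\mid p)\,dp$, and $\pi(p\mid y^m)=\pi(p)\pi(y^m\mid p)/\pi(y^m)$. Let $\bar y:\Omega\to\mathbb{R}^m$ and $\Gamma:\Omega\to\mathbb{R}^{m\times m}$ (with $\Gamma(p)$ symmetric positive semidefinite) be the surrogate predictive mean and covariance, $L_{\mathcal D}(p)=(2\pi)^{-m/2}\det(\Sigma^2+\Gamma(p))^{-1/2}\exp(-\tfrac12\|y^m-\bar y(p)\|_{(\Sigma^2+\Gamma(p))^{-1}}^2)$, $\pi_{\mathcal D}(y^m)=\int_\Omega\pi(p)L_{\mathcal D}(p)\,dp$, and $\pi(p\mid y^m,\mathcal D)=\pi(p)L_{\mathcal D}(p)/\pi_{\mathcal D}(y^m)$. Assume $\pi_{\mathcal D}(y^m)\le\alpha\,\pi(y^m)$ for some $\alpha<\infty$. Let $\phi(a,b)=\tfrac12a+b\sqrt a$ and $$\psi(y^m,p)=\tfrac12\operatorname{tr}\big(\Sigma^{-2}\Gamma(p)\big)+\phi\Big(\|\bar y(p)-y(p)\|_{\Sigma^{-2}}^2,\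 \|y^m-y(p)\|_{\Sigma^{-2}}\Big)+\log\alpha.$$ Then $$\int_\Omega\pi(p\mid y^m)\,\|y(p)-\bar y(p)\|_2^2\,dp\le\int_\Omega\pi(p\mid y^m,\mathcal D)\,\|y(p)-\bar y(p)\|_2^2\exp\big(\psi(y^m,p)\big)\,dp.$$
   Context: For a symmetric positive definite matrix $M$, $\|x\|_M=\sqrt{x^TMx}$; $\|\cdot\|_2$ is the Euclidean norm. The left-hand side is the posterior-weighted squared $L^2$ distance $\|y-\bar y\|^2_{L^2(\Omega;\pi(\cdot\mid y^m))}$. *)

From HB Require Import structures.
From mathcomp Require Import all_boot all_order all_algebra.
From mathcomp Require Import all_classical all_reals all_analysis.
Set Implicit Arguments. Unset Strict Implicit. Unset Printing Implicit Defensive.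
Import Order.TTheory GRing.Theory Num.Theory.
Local Open Scope ring_scope.

Definition spd (R : realType) (m : nat) (M : 'M[R]_m) : Prop :=
  M^T = M /\ forall x : 'cV[R]_m, x != 0 -> 0 < (x^T *m M *m x) 0 0.
Definition spsd (R : realType) (m : nat) (M : 'M[R]_m) : Prop :=
  M^T = M /\ forall x : 'cV[R]_m, 0 <= (x^T *m M *m x) 0 0.

Definition mnorm (R : realType) (m : nat) (M : 'M[R]_m) (x : 'cV[R]_m) : R :=
  Num.sqrt ((x^T *m M *m x) 0 0).

Definition norm2 (R : realType) (m : nat) (x : 'cV[R]_m) : R :=
  Num.sqrt (\sum_(i < m) x i 0 ^+ 2).

Definition gauss_lik (R : realType) (m : nat) (C : 'M[R]_m) (z mean : 'cV[R]_m) : R :=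
  powR (2 * pi) (- (m%:R / 2)) * powR (\det C) (- (1 / 2))
  * expR (- (1 / 2) * mnorm (invmx C) (z - mean) ^+ 2).

Definition phi (R : realType) (a b : R) : R := a / 2 + b * Num.sqrt a.

From HB Require Import structures.
From mathcomp Require Import all_boot all_order all_algebra.
From mathcomp Require Import all_classical all_reals all_analysis.
From mathcomp Require Import ring lra.
Import Order.TTheory GRing.Theory Num.Theory.
Set Implicit Arguments. Unset Strict Implicit. Unset Printing Implicit Defensive.
Local Open Scope ring_scope.

(* The bound holds pointwise before integration.  Writing
   Sigma^2 + Gamma = Sigma (I + A) Sigma with A = Sigma^-1 Gamma Sigma^-1
   positive semidefinite, Hadamard's inequality gives
   det (I + A) <= prod_i (1 + A_ii) <= exp (tr A) = exp (tr (Sigma^-2 Gamma)),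
   which compares the normalising constants of the two Gaussian likelihoods.
   Since (Sigma^2 + Gamma)^-1 <= Sigma^-2 in the Loewner order, expanding
   y^m - ybar = (y^m - y) - (ybar - y) with Cauchy-Schwarz compares the
   exponents up to phi.  Finally pi_D(y^m) <= alpha pi(y^m) compares the
   normalisations of the two posteriors, which contributes log alpha. *)

Section QuadraticForm.
Variable R : realFieldType.
Implicit Type n : nat.

Definition bform n (M : 'M[R]_n) (x z : 'cV[R]_n) : R := (x^T *m M *m z) 0 0.
Definition qform n (M : 'M[R]_n) (x : 'cV[R]_n) : R := bform M x x.

Lemma bformC n (M : 'M[R]_n) x z : M^T = M -> bform M x z = bform M z x.
Proof.
move=> sM; rewrite /bform -[in LHS](trmxK (x^T *m M *m z)) mxE.
by rewrite !trmx_mul trmxK sM mulmxA.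
Qed.

Lemma bformDl n (M : 'M[R]_n) x1 x2 z : bform M (x1 + x2) z = bform M x1 z + bform M x2 z.
Proof. by rewrite /bform linearD /= !mulmxDl mxE. Qed.

Lemma bformDr n (M : 'M[R]_n) x z1 z2 : bform M x (z1 + z2) = bform M x z1 + bform M x z2.
Proof. by rewrite /bform mulmxDr mxE. Qed.

Lemma bformZl n (M : 'M[R]_n) a x z : bform M (a *: x) z = a * bform M x z.
Proof. by rewrite /bform linearZ /= -!scalemxAl mxE. Qed.

Lemma bformZr n (M : 'M[R]_n) a x z : bform M x (a *: z) = a * bform M x z.
Proof. by rewrite /bform -scalemxAr mxE. Qed.

Lemma qformDl n (M N : 'M[R]_n) x : qform (M + N) x = qform M x + qform N x.
Proof. by rewrite /qform /bform mulmxDr mulmxDl mxE. Qed.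

Lemma qformBl n (M N : 'M[R]_n) x : qform (M - N) x = qform M x - qform N x.
Proof. by rewrite /qform /bform mulmxBr mulmxBl !mxE. Qed.

Lemma qformDZr n (M : 'M[R]_n) u w t : M^T = M ->
  qform M (u + t *: w) = qform M u + 2 * t * bform M u w + t ^+ 2 * qform M w.
Proof.
move=> sM; rewrite /qform bformDl !bformDr !bformZl !bformZr (bformC u) //; ring.
Qed.

Lemma quadratic_ge0_disc (a b c : R) : 0 <= c ->
  (forall t, 0 <= a + 2 * t * b + t ^+ 2 * c) -> b ^+ 2 <= a * c.
Proof.
move=> c_ge0 q_ge0; have a_ge0 := q_ge0 0.
rewrite mulr0 mul0r expr0n /= mul0r !addr0 in a_ge0.
have [c0|c_gt0] := eqVneq c 0.
  rewrite c0 mulr0; have [->|b0] := eqVneq b 0; first by rewrite expr0n.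
  have := q_ge0 (- (a + 1) / (2 * b)); rewrite c0 mulr0 addr0.
  have -> : 2 * (- (a + 1) / (2 * b)) * b = - (a + 1) by field; rewrite b0.
  lra.
have := q_ge0 (- b / c).
have -> : a + 2 * (- b / c) * b + (- b / c) ^+ 2 * c = (a * c - b ^+ 2) / c.
  by field.
by rewrite pmulr_lge0 ?invr_gt0 ?lt_def ?c_gt0 // subr_ge0.
Qed.

Lemma pd_psd n (M : 'M[R]_n) :
  (forall x, x != 0 -> 0 < qform M x) -> forall x, 0 <= qform M x.
Proof.
move=> M_pd x; have [->|/M_pd/ltW//] := eqVneq x 0.
by rewrite /qform /bform mulmx0 mxE.
Qed.

Lemma pd_unitmx n (M : 'M[R]_n) :
  (forall x, x != 0 -> 0 < qform M x) -> M \in unitmx.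
Proof.
move=> M_pd; rewrite unitmxE unitfE; apply/negP => /det0P [v v0 vM].
have /M_pd : v^T != 0 by rewrite -[0]trmx0 (inj_eq trmx_inj).
by rewrite /qform /bform trmxK vM mul0mx mxE ltxx.
Qed.

Lemma qform_invmx n (M : 'M[R]_n) x : M^T = M -> M \in unitmx ->
  qform (invmx M) x = qform M (invmx M *m x).
Proof.
by move=> M_sym uM; rewrite /qform /bform trmx_mul trmx_inv M_sym -!mulmxA mulKVmx.
Qed.

Lemma invmx_pd_psd n (M : 'M[R]_n) : M^T = M ->
  (forall x, x != 0 -> 0 < qform M x) -> forall x, 0 <= qform (invmx M) x.
Proof. by move=> M_sym M_pd x; rewrite qform_invmx ?pd_psd ?pd_unitmx. Qed.

Section SymmetricPsd.
Variables (n : nat) (M : 'M[R]_n).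
Hypotheses (M_sym : M^T = M) (M_psd : forall x, 0 <= qform M x).

Lemma bform_Cauchy_Schwarz u w : bform M u w ^+ 2 <= qform M u * qform M w.
Proof. by apply: quadratic_ge0_disc => // t; rewrite -qformDZr. Qed.

(* One half of the variational formula x^T M^-1 x = max_z (2 z^T x - z^T M z). *)
Lemma qform_invmx_ge x z : M \in unitmx ->
  2 * (z^T *m x) 0 0 - qform M z <= qform (invmx M) x.
Proof.
move=> uM; have := M_psd (z + (-1) *: (invmx M *m x)); rewrite qformDZr //.
have -> : bform M z (invmx M *m x) = (z^T *m x) 0 0 by rewrite /bform -mulmxA mulKVmx.
rewrite -qform_invmx //; lra.
Qed.

End SymmetricPsd.

Lemma qform_invmx_addr_le n (M G : 'M[R]_n) x :
  M^T = M -> (forall x, x != 0 -> 0 < qform M x) ->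
  G^T = G -> (forall x, 0 <= qform G x) ->
  qform (invmx (M + G)) x <= qform (invmx M) x.
Proof.
move=> M_sym M_pd G_sym G_psd.
have MG_sym : (M + G)^T = M + G by rewrite linearD /= M_sym G_sym.
have MG_pd x' : x' != 0 -> 0 < qform (M + G) x'.
  by move=> /M_pd; rewrite qformDl; exact: ltr_wpDr.
have uMG := pd_unitmx MG_pd.
pose z := invmx (M + G) *m x.
have zx : (z^T *m x) 0 0 = qform (M + G) z by rewrite /qform /bform -mulmxA mulKVmx.
have := qform_invmx_ge MG_sym (pd_psd MG_pd) x z uMG.
have := qform_invmx_ge M_sym (pd_psd M_pd) x z (pd_unitmx M_pd).
have := G_psd z; rewrite zx (qform_invmx x MG_sym uMG) -/z qformDl; lra.
Qed.

End QuadraticForm.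

Section Hadamard.
Variable R : realFieldType.

Lemma qform_delta n (M : 'M[R]_n) i : qform M (delta_mx i 0) = M i i.
Proof. by rewrite /qform /bform trmx_delta -rowE -colE !mxE. Qed.

Lemma pd_diag_gt0 n (M : 'M[R]_n) i :
  (forall x, x != 0 -> 0 < qform M x) -> 0 < M i i.
Proof.
move=> M_pd; rewrite -qform_delta; apply: M_pd.
by apply/negP => /eqP/matrixP/(_ i 0); rewrite !mxE !eqxx /= => /eqP; rewrite oner_eq0.
Qed.

Definition schur_compl n (M : 'M[R]_(1 + n)) : 'M[R]_n :=
  drsubmx M - dlsubmx M *m ((ulsubmx M 0 0)^-1 *: ursubmx M).

Lemma qform_col_mx n1 n2 (M : 'M[R]_(n1 + n2)) w x :
  qform M (col_mx w x) = qform (ulsubmx M) w + (w^T *m ursubmx M *m x) 0 0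
    + (x^T *m dlsubmx M *m w) 0 0 + qform (drsubmx M) x.
Proof.
rewrite /qform /bform -[M in LHS]submxK tr_col_mx mul_row_block mul_row_col.
by rewrite !mulmxDl !mxE; ring.
Qed.

Lemma mx11_mulmx (P Q : 'M[R]_1) : (P *m Q) 0 0 = P 0 0 * Q 0 0.
Proof. by rewrite mxE big_ord1. Qed.

Section SchurComplement.
Variables (n : nat) (M : 'M[R]_(1 + n)).
Let a := ulsubmx M 0 0.

Lemma det_schur_compl : a != 0 -> \det M = a * \det (schur_compl M).
Proof.
move=> a0; have eA : ulsubmx M = a%:M by rewrite [LHS]mx11_scalar.
have eM : M = block_mx 1%:M 0 (a^-1 *: dlsubmx M) 1%:M
              *m block_mx (ulsubmx M) (ursubmx M) 0 (schur_compl M).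
  rewrite mulmx_block !mul1mx !mul0mx !addr0 eA mul_mx_scalar scalerA mulfV //.
  by rewrite scale1r /schur_compl -scalemxAl -scalemxAr addrC subrK -eA submxK.
by rewrite {1}eM det_mulmx det_lblock det_ublock !det1 !mul1r eA det_scalar1.
Qed.

Hypothesis M_sym : M^T = M.

Lemma tr_dlsubmx : (dlsubmx M)^T = ursubmx M.
Proof. by rewrite -[in RHS]M_sym -[M in RHS]submxK tr_block_mx block_mxKur. Qed.

Lemma tr_drsubmx : (drsubmx M)^T = drsubmx M.
Proof. by rewrite -[in RHS]M_sym -[M in RHS]submxK tr_block_mx block_mxKdr. Qed.

Lemma schur_compl_sym : (schur_compl M)^T = schur_compl M.
Proof.
have cT : (ursubmx M)^T = dlsubmx M by rewrite -tr_dlsubmx trmxK.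
rewrite /schur_compl linearB /= tr_drsubmx trmx_mul linearZ /= cT tr_dlsubmx.
by rewrite -scalemxAl -scalemxAr.
Qed.

Lemma qform_schur_compl x (k := (ursubmx M *m x) 0 0) :
  qform (schur_compl M) x = qform M (col_mx (- (a^-1 * k))%:M x).
Proof.
rewrite /schur_compl qformBl.
have xb : (x^T *m dlsubmx M) 0 0 = k.
  by rewrite /k -tr_dlsubmx -[x in RHS]trmxK -trmx_mul [RHS]mxE.
have -> : qform (dlsubmx M *m (a^-1 *: ursubmx M)) x = a^-1 * k ^+ 2.
  rewrite /qform /bform -!scalemxAr -scalemxAl mxE.
  by rewrite mulmxA -(mulmxA (x^T *m _)) mx11_mulmx xb expr2.
rewrite qform_col_mx; set qD := qform (drsubmx M) x.
rewrite /qform /bform -[(_%:M^T *m ursubmx M *m x)]mulmxA !mx11_mulmx xb -/k.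
rewrite -/a !mxE eqxx mulr1n.
by have [->|a0] := eqVneq a 0; [rewrite invr0; ring | field].
Qed.

Lemma schur_compl_pd : (forall x, x != 0 -> 0 < qform M x) ->
  forall x, x != 0 -> 0 < qform (schur_compl M) x.
Proof.
move=> M_pd x x0; rewrite qform_schur_compl; apply: M_pd.
by rewrite col_mx_eq0 negb_and x0 orbT.
Qed.

Lemma schur_compl_diag i :
  schur_compl M i i = drsubmx M i i - a^-1 * dlsubmx M i 0 ^+ 2.
Proof. by rewrite /schur_compl -/a -tr_dlsubmx !mxE big_ord1 !mxE mulrCA expr2. Qed.

End SchurComplement.

Lemma pd_det_gt0_le_prod_diag n (M : 'M[R]_n) :
  M^T = M -> (forall x, x != 0 -> 0 < qform M x) ->
  0 < \det M /\ \det M <= \prod_i M i i.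
Proof.
elim: n M => [M _ _|n IH]; first by rewrite det_mx00 big_ord0 ltr01 lexx.
rewrite -[n.+1]/(1 + n)%N => M M_sym M_pd.
have a_eq : ulsubmx M 0 0 = M ord0 ord0.
  by rewrite !mxE (_ : lshift n 0 = ord0) //; apply: val_inj.
have d_eq i : drsubmx M i i = M (lift ord0 i) (lift ord0 i).
  by rewrite !mxE (_ : rshift 1 i = lift ord0 i) //; apply: val_inj.
have a_gt0 : 0 < ulsubmx M 0 0 by rewrite a_eq; exact: pd_diag_gt0 M_pd.
have S_pd := schur_compl_pd M_sym M_pd.
have [dS_gt0 dS_le] := IH _ (schur_compl_sym M_sym) S_pd.
rewrite (det_schur_compl (lt0r_neq0 a_gt0)); split; first exact: mulr_gt0.
rewrite big_ord_recl -a_eq ler_pM2l //; apply: le_trans dS_le _.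
apply: ler_prod => i _; rewrite ltW ?pd_diag_gt0 //= -d_eq.
rewrite schur_compl_diag // lerBlDr lerDl.
by rewrite mulr_ge0 ?invr_ge0 ?sqr_ge0 ?ltW.
Qed.

End Hadamard.

Lemma invmxM (R : comUnitRingType) n (A B : 'M[R]_n) :
  A \in unitmx -> B \in unitmx -> invmx (A *m B) = invmx B *m invmx A.
Proof.
move=> uA uB; have uAB : A *m B \in unitmx by rewrite unitmx_mul uA.
by rewrite -[RHS]mul1mx -(mulVmx uAB) -!mulmxA (mulKVmx uB) (mulmxV uA) mulmx1.
Qed.

Section Congruence.
Variable R : realFieldType.

Lemma qform_congr n (P M : 'M[R]_n) x : qform (P^T *m M *m P) x = qform M (P *m x).
Proof. by rewrite /qform /bform trmx_mul !mulmxA. Qed.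

Lemma qform1_gt0 n (x : 'cV[R]_n) : x != 0 -> 0 < qform 1%:M x.
Proof.
move=> x0; rewrite /qform /bform mulmx1 mxE.
have sq_ge0 j : 0 <= x^T 0 j * x j 0 by rewrite mxE -expr2 sqr_ge0.
rewrite lt_def sumr_ge0 // andbT psumr_neq0 //.
have [i xi0] : exists i, x i 0 != 0.
  apply/existsP; apply: contraR x0 => /existsPn x_eq0.
  by apply/eqP/matrixP => i j; rewrite (ord1 j) mxE; apply/eqP/negbNE.
apply/hasP; exists i; first by rewrite mem_index_enum.
by rewrite mxE -expr2 lt_def sqrf_eq0 xi0 sqr_ge0.
Qed.

Lemma invmx_sym n (M : 'M[R]_n) : M^T = M -> (invmx M)^T = invmx M.
Proof. by move=> M_sym; rewrite trmx_inv M_sym. Qed.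

Section SquarePlusPsd.
Variables (n : nat) (S G : 'M[R]_n).
Hypotheses (S_sym : S^T = S) (S_unit : S \in unitmx).
Hypotheses (G_sym : G^T = G) (G_psd : forall x, 0 <= qform G x).

Lemma sqr_sym_pd x : x != 0 -> 0 < qform (S *m S) x.
Proof.
move=> x0; have -> : S *m S = S^T *m 1%:M *m S by rewrite mulmx1 S_sym.
rewrite qform_congr.
apply: qform1_gt0; apply: contraNneq x0 => Sx0.
by rewrite -(mulKmx S_unit x) Sx0 mulmx0.
Qed.

Lemma sqr_addr_psd_sym : (S *m S + G)^T = S *m S + G.
Proof. by rewrite linearD /= trmx_mul S_sym G_sym. Qed.

Lemma sqr_addr_psd_pd x : x != 0 -> 0 < qform (S *m S + G) x.
Proof. by move=> /sqr_sym_pd; rewrite qformDl; exact: ltr_wpDr. Qed.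

Lemma sqr_sym : (S *m S)^T = S *m S.
Proof. by rewrite trmx_mul S_sym. Qed.

Lemma det_sqr_gt0 : 0 < \det (S *m S).
Proof. exact: (pd_det_gt0_le_prod_diag sqr_sym sqr_sym_pd).1. Qed.

Lemma det_sqr_addr_psd_gt0 : 0 < \det (S *m S + G).
Proof. exact: (pd_det_gt0_le_prod_diag sqr_addr_psd_sym sqr_addr_psd_pd).1. Qed.

Let A := invmx S *m G *m invmx S.

Lemma normalized_psd x : 0 <= qform A x.
Proof. by rewrite /A -{1}(invmx_sym S_sym) qform_congr G_psd. Qed.

Lemma det_sqr_addr_psd_le :
  \det (S *m S + G) <= \det (S *m S) * \prod_i (1 + A i i).
Proof.
have A_sym : A^T = A by rewrite /A !trmx_mul invmx_sym // G_sym mulmxA.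
have eN : S *m (1%:M + A) *m S = S *m S + G.
  by rewrite mulmxDr mulmxDl mulmx1 /A -!mulmxA (mulKVmx S_unit) (mulVmx S_unit) mulmx1.
have N_sym : (1%:M + A)^T = 1%:M + A by rewrite linearD /= trmx1 A_sym.
have N_pd x : x != 0 -> 0 < qform (1%:M + A) x.
  by move=> /qform1_gt0; rewrite qformDl; apply: ltr_wpDr; exact: normalized_psd.
have [_ dN] := pd_det_gt0_le_prod_diag N_sym N_pd.
have diagN i : (1%:M + A) i i = 1 + A i i by rewrite !mxE eqxx.
rewrite (eq_bigr _ (fun i _ => diagN i)) in dN.
rewrite -eN !det_mulmx mulrAC -det_mulmx ler_wpM2l //; exact/ltW/det_sqr_gt0.
Qed.

End SquarePlusPsd.

End Congruence.

Lemma qformB_le (R : rcfType) n (M : 'M[R]_n) u w : M^T = M -> (forall x, 0 <= qform M x) ->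
  qform M (u - w) <=
    qform M u + qform M w + 2 * Num.sqrt (qform M u) * Num.sqrt (qform M w).
Proof.
move=> M_sym M_psd; rewrite -scaleN1r qformDZr // sqrrN expr1n.
suff : - bform M u w <= Num.sqrt (qform M u) * Num.sqrt (qform M w) by lra.
rewrite -sqrtrM ?M_psd //; apply: le_trans (ler_norm _) _.
by rewrite normrN -sqrtr_sqr ler_sqrt ?mulr_ge0 ?M_psd ?bform_Cauchy_Schwarz.
Qed.

Section GaussianLikelihood.
Variables (R : realType) (m : nat).
Implicit Types (ym y yb : 'cV[R]_m).

Lemma gauss_lik_ge0 (C : 'M[R]_m) ym y : 0 <= gauss_lik C ym y.
Proof. by rewrite /gauss_lik !mulr_ge0 ?powR_ge0 ?expR_ge0. Qed.

Lemma mnorm_sqr (M : 'M[R]_m) x :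
  (forall x, 0 <= qform M x) -> mnorm M x ^+ 2 = qform M x.
Proof. by move=> M_psd; rewrite /mnorm sqr_sqrtr //; exact: M_psd. Qed.

Lemma gauss_exponent_addr_psd_le (M G : 'M[R]_m) ym y yb :
  M^T = M -> (forall x, x != 0 -> 0 < qform M x) ->
  G^T = G -> (forall x, 0 <= qform G x) ->
  - (1 / 2) * qform (invmx M) (ym - y) <=
  - (1 / 2) * qform (invmx (M + G)) (ym - yb)
  + phi (qform (invmx M) (yb - y)) (Num.sqrt (qform (invmx M) (ym - y))).
Proof.
move=> M_sym M_pd G_sym G_psd.
have Mi_psd := invmx_pd_psd M_sym M_pd.
have := qform_invmx_addr_le (ym - yb) M_sym M_pd G_sym G_psd.
have := qformB_le (ym - y) (yb - y) (invmx_sym M_sym) Mi_psd.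
rewrite opprB addrA subrK /phi.
have := sqrtr_ge0 (qform (invmx M) (yb - y)); lra.
Qed.

Section SquarePlusPsd.
Variables (S G : 'M[R]_m).
Hypotheses (S_sym : S^T = S) (S_unit : S \in unitmx).
Hypotheses (G_sym : G^T = G) (G_psd : forall x, 0 <= qform G x).

Lemma det_sqr_addr_psd_le_expR :
  \det (S *m S + G) <= \det (S *m S) * expR (\tr (invmx (S *m S) *m G)).
Proof.
apply: le_trans (det_sqr_addr_psd_le S_sym S_unit G_sym G_psd) _.
apply: ler_wpM2l; first exact/ltW/det_sqr_gt0.
have -> : \tr (invmx (S *m S) *m G) = \tr (invmx S *m G *m invmx S).
  by rewrite invmxM // -mulmxA mxtrace_mulC.
rewrite /mxtrace expR_sum; apply: ler_prod => i _.
have := normalized_psd S_sym G_psd (delta_mx i 0); rewrite qform_delta => A_ii_ge0.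
by rewrite addr_ge0 ?expR_ge1Dx.
Qed.

Lemma powR_det_sqr_addr_psd_le :
  powR (\det (S *m S)) (- (1 / 2)) <=
  powR (\det (S *m S + G)) (- (1 / 2)) * expR (1 / 2 * \tr (invmx (S *m S) *m G)).
Proof.
have d1_gt0 := det_sqr_gt0 S_sym S_unit.
have d2_gt0 := det_sqr_addr_psd_gt0 S_sym S_unit G_sym G_psd.
have := det_sqr_addr_psd_le_expR.
rewrite -ler_ln ?posrE ?mulr_gt0 ?expR_gt0 // lnM ?posrE ?expR_gt0 // expRK.
by rewrite /powR !gt_eqF // -expRD ler_expR; lra.
Qed.

Lemma gauss_lik_sqr_le_addr_psd ym y yb :
  gauss_lik (S *m S) ym y <= gauss_lik (S *m S + G) ym yb *
    expR (1 / 2 * \tr (invmx (S *m S) *m G)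
          + phi (mnorm (invmx (S *m S)) (yb - y) ^+ 2) (mnorm (invmx (S *m S)) (ym - y))).
Proof.
have SS_pd := sqr_sym_pd S_sym S_unit.
have SSi_psd := invmx_pd_psd (sqr_sym S_sym) SS_pd.
have := invmx_pd_psd (sqr_addr_psd_sym S_sym G_sym) (sqr_addr_psd_pd S_sym S_unit G_psd).
move=> SSGi_psd; rewrite /gauss_lik !mnorm_sqr // -!mulrA.
apply: ler_wpM2l; first exact: powR_ge0.
apply: le_trans (ler_wpM2r (expR_ge0 _) powR_det_sqr_addr_psd_le) _.
rewrite -!mulrA; apply: ler_wpM2l; first exact: powR_ge0.
rewrite -!expRD ler_expR.
have := gauss_exponent_addr_psd_le ym y yb (sqr_sym S_sym) SS_pd G_sym G_psd; lra.
Qed.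

End SquarePlusPsd.

End GaussianLikelihood.

(* Unlike ge0_le_integral, no measurability is needed: the integral of a
   nonnegative function is the supremum of those of the simple functions below it. *)
Lemma ge0_le_integral_nomeas d (T : measurableType d) (R : realType)
    (mu : {measure set T -> \bar R}) (D : set T) (f g : T -> \bar R) :
  (forall x, D x -> (0 <= f x)%E) -> (forall x, D x -> (f x <= g x)%E) ->
  (\int[mu]_(x in D) f x <= \int[mu]_(x in D) g x)%E.
Proof.
move=> f_ge0 fg; have g_ge0 x : D x -> (0 <= g x)%E.
  by move=> Dx; exact: le_trans (f_ge0 x Dx) (fg x Dx).
rewrite !(integral_mkcond D) (ge0_integralTE _ (erestrict_ge0 f_ge0)).
rewrite (ge0_integralTE _ (erestrict_ge0 g_ge0)).
apply: ge_ereal_sup => _ [h hf <-]; apply: ereal_sup_ubound; exists h => // x.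
by apply: le_trans (hf x) _; rewrite !patchE; case: ifP => // /set_mem /fg.
Qed.

Lemma fine_ratio_bounds (R : realType) (e eD : \bar R) (alpha : R) :
  (0 < e < +oo)%E -> (0 < eD < +oo)%E -> (eD <= alpha%:E * e)%E ->
  [/\ 0 < fine e, 0 < alpha & (fine e)^-1 <= alpha / fine eD].
Proof.
move=> /andP[e_gt0 e_fin] /andP[eD_gt0 eD_fin] eD_le.
have fe_gt0 : 0 < fine e by apply: fine_gt0; rewrite e_gt0 e_fin.
have feD_gt0 : 0 < fine eD by apply: fine_gt0; rewrite eD_gt0 eD_fin.
have feD_le : fine eD <= alpha * fine e.
  by rewrite -lee_fin EFinM !fineK // ge0_fin_numE ?ltW.
have alpha_gt0 : 0 < alpha.
  by rewrite -(pmulr_lgt0 _ fe_gt0); exact: lt_le_trans feD_gt0 feD_le.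
by split => //; rewrite ler_pdivlMr // mulrC ler_pdivrMr.
Qed.

Local Open Scope classical_set_scope.

Theorem corollary1 (R : realType) (d : measure_display) (T : measurableType d)
  (mu : {measure set T -> \bar R}) (Omega : set T) (m : nat)
  (y ybar : T -> 'cV[R]_m) (Gamma : T -> 'M[R]_m) (prior : T -> R)
  (ym : 'cV[R]_m) (Sigma : 'M[R]_m) (alpha : R) :
  measurable Omega ->
  (forall i, measurable_fun Omega (fun p => y p i 0)) ->
  (forall i, measurable_fun Omega (fun p => ybar p i 0)) ->
  (forall i j, measurable_fun Omega (fun p => Gamma p i j)) ->
  measurable_fun Omega prior ->
  (forall p, Omega p -> 0 <= prior p) ->
  (\int[mu]_(p in Omega) (prior p)%:E = 1)%E ->
  spd Sigma ->
  (forall p, Omega p -> spsd (Gamma p)) ->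
  let lik := fun p => gauss_lik (Sigma *m Sigma) ym (y p) in
  let evid := (\int[mu]_(p in Omega) (prior p * lik p)%:E)%E in
  let post := fun p => prior p * lik p / fine evid in
  let LD := fun p => gauss_lik (Sigma *m Sigma + Gamma p) ym (ybar p) in
  let evidD := (\int[mu]_(p in Omega) (prior p * LD p)%:E)%E in
  let postD := fun p => prior p * LD p / fine evidD in
  (0 < evid < +oo)%E ->
  (0 < evidD < +oo)%E ->
  (evidD <= alpha%:E * evid)%E ->
  let S2inv := invmx (Sigma *m Sigma) in
  let psi := fun p => 1 / 2 * \tr (S2inv *m Gamma p)
      + phi (mnorm S2inv (ybar p - y p) ^+ 2) (mnorm S2inv (ym - y p))
      + ln alpha in
  (\int[mu]_(p in Omega) (post p * norm2 (y p - ybar p) ^+ 2)%:E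
   <= \int[mu]_(p in Omega)
        (postD p * norm2 (y p - ybar p) ^+ 2 * expR (psi p))%:E)%E.
Proof.
move=> _ _ _ _ _ prior_ge0 _ [Sigma_sym Sigma_pd] Gamma_psd lik evid post LD evidD postD
  evid_bnd evidD_bnd evidD_le; cbv zeta beta.
have [E_gt0 alpha_gt0 E_inv_le] := fine_ratio_bounds evid_bnd evidD_bnd evidD_le.
(* Otherwise unification below unfolds and compares the two integrals. *)
clearbody evid evidD.
apply: ge0_le_integral_nomeas => p Op; rewrite lee_fin.
  apply: mulr_ge0 (sqr_ge0 _); apply: divr_ge0 (ltW E_gt0).
  exact: mulr_ge0 (prior_ge0 _ Op) (gauss_lik_ge0 _ _ _).
have [Gamma_sym Gamma_psd_p] := Gamma_psd p Op.
have lik_le := gauss_lik_sqr_le_addr_psd Sigma_sym (pd_unitmx Sigma_pd)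
  Gamma_sym Gamma_psd_p ym (y p) (ybar p).
rewrite expRD lnK ?posrE //; set n2 := norm2 _ ^+ 2; set X := expR _.
have -> : post p * n2 = prior p * n2 * (lik p * (fine evid)^-1) by rewrite /post; ring.
have -> : postD p * n2 * (X * alpha) = prior p * n2 * (LD p * X * (alpha / fine evidD)).
  by rewrite /postD; ring.
apply: ler_wpM2l; first by rewrite mulr_ge0 ?prior_ge0 ?sqr_ge0.
by apply: ler_pM (gauss_lik_ge0 _ _ _) _ lik_le E_inv_le; rewrite invr_ge0 ltW.
Qed.
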